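(* Let the functions satisfy the $M=2$ system and the boundary conditions (B) (see context), assume $\eta_0'(s)\neq0$ and $y_2(s)\ne0$ for $s>0$, and define $G:=x_0/y_2$. Then $$\Big(3s\frac{G'}{G}+2e_1\Big)^2-4e_1^2=12\Big(\eta_0-e_2-3s\eta_0'-s\frac{\eta_0''}{\eta_0'}\Big)-12s^2\Big(\frac{\eta_0'''}{\eta_0'}-\frac34\Big(\frac{\eta_0''}{\eta_0'}\Big)^2\Big).$$ If moreover, as $s\to0^+$, $x_0(s)\sim -\dfrac{i s^{-\nu_0}}{\Gamma(\nu_1-\nu_0+1)\Gamma(\nu_2-\nu_0+1)}$ and $y_2(s)\sim \dfrac{i\Gamma(\nu_2-\nu_1)s^{\nu_1}}{\Gamma(\nu_1-\nu_0+1)}+\dfrac{i\Gamma(\nu_1-\nu_2)s^{\nu_2}}{\Gamma(\nu_2-\nu_0+1)}$, then $$G^{-1}\sim-\Gamma(\nu_2-\nu_1)\Gamma(\nu_2-\nu_0+1)s^{\nu_1+\nu_0}-\Gamma(\nu_1-\nu_2)\Gamma(\nu_1-\nu_0+1)s^{\nu_2+\nu_0}\quad(s\to0^+).$$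
   Context: Fix complex parameters $\nu_0,\nu_1,\nu_2$ with $\nu_2-\nu_1\notin\mathbb Z$, and let $e_1=\nu_0+\nu_1+\nu_2$, $e_2=\nu_0\nu_1+\nu_0\nu_2+\nu_1\nu_2$, $e_3=\nu_0\nu_1\nu_2$. The $M=2$ system is the following system for smooth complex-valued functions $x_0,x_1,x_2,y_0,y_1,y_2,\xi_0,\xi_1,\xi_2,\eta_0,\eta_1,\eta_2$ of $s\in(0,\infty)$, with $'=d/ds$: $sx_0'=-\eta_0x_0-x_1$, $sx_1'=-\eta_1x_0-x_2$, $sx_2'=-\eta_2x_0-sx_0+\xi_0x_0+\xi_1x_1+\xi_2x_2$, $sy_2'=-\xi_2y_2+y_1$, $sy_1'=-\xi_1y_2+y_0$, $sy_0'=-\xi_0y_2+sy_2+\eta_0y_0+\eta_1y_1+\eta_2y_2$, $\xi_0'=-x_0y_0$, $\xi_1'=-x_0y_1$, $\xi_2'=-x_0y_2$, $\eta_0'=-x_0y_2$, $\eta_1'=-x_1y_2$, $\eta_2'=-x_2y_2$. Boundary conditions (B): as $s\to0^+$, $\eta_0,\eta_1,\eta_2\to0$, $\xi_0\to-e_3$, $\xi_1\to e_2$, $\xi_2\to-e_1$, and $x_j(s)y_k(s)\to0$, $s\,x_j(s)y_k(s)\to0$ for all $j,k\in\{0,1,2\}$. *)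

From Stdlib Require Import Arith Reals Lra List ClassicalEpsilon.
Open Scope R_scope.

Definition Cplx : Type := (R * R)%type.
Definition RtoC (x : R) : Cplx := (x, 0).
Definition Ci : Cplx := (0, 1).
Definition Czero : Cplx := RtoC 0.
Definition Cone : Cplx := RtoC 1.
Definition Cadd (z w : Cplx) : Cplx := (fst z + fst w, snd z + snd w).
Definition Copp (z : Cplx) : Cplx := (- fst z, - snd z).
Definition Csub (z w : Cplx) : Cplx := Cadd z (Copp w).
Definition Cmul (z w : Cplx) : Cplx :=
  (fst z * fst w - snd z * snd w, fst z * snd w + snd z * fst w).
(* Cinv 0 = 0 *)
Definition Cinv (z : Cplx) : Cplx :=
  (fst z / (fst z ^ 2 + snd z ^ 2), - snd z / (fst z ^ 2 + snd z ^ 2)).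
Definition Cdiv (z w : Cplx) : Cplx := Cmul z (Cinv w).
Definition Cnorm (z : Cplx) : R := sqrt (fst z ^ 2 + snd z ^ 2).

Declare Scope C_scope.
Delimit Scope C_scope with C.
Bind Scope C_scope with Cplx.
Infix "+" := Cadd : C_scope.
Infix "-" := Csub : C_scope.
Infix "*" := Cmul : C_scope.
Infix "/" := Cdiv : C_scope.
Notation "- z" := (Copp z) : C_scope.
Notation "z ^2" := (Cmul z z) (at level 30) : C_scope.

Definition Cexp (z : Cplx) : Cplx := (exp (fst z) * cos (snd z), exp (fst z) * sin (snd z)).
Definition Cpow (t : R) (z : Cplx) : Cplx := Cexp (Cmul z (RtoC (ln t))).

Definition lim0 (f : R -> Cplx) (l : Cplx) : Prop :=
  forall eps, 0 < eps -> exists delta, 0 < delta /\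
    forall s, 0 < s < delta -> Cnorm (Csub (f s) l) < eps.

Definition asym0 (f g : R -> Cplx) : Prop := lim0 (fun s => Cdiv (f s) (g s)) Cone.

Definition Ccv (u : nat -> Cplx) (l : Cplx) : Prop :=
  forall eps, 0 < eps -> exists N, forall n, (n >= N)%nat -> Cnorm (Csub (u n) l) < eps.

(** Reciprocal Gamma function (entire) via Gauss' limit:
    1/Gamma(z) = lim_n z (z+1) ... (z+n) / (n! n^z). *)
Fixpoint Cpoch (z : Cplx) (n : nat) : Cplx :=
  match n with
  | O => z
  | S m => Cmul (Cpoch z m) (Cadd z (RtoC (INR (S m))))
  end.
Definition rgamma_seq (z : Cplx) (n : nat) : Cplx :=
  Cdiv (Cpoch z n) (Cmul (RtoC (INR (Factorial.fact n))) (Cpow (INR n) z)).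
Definition rGamma (z : Cplx) : Cplx :=
  epsilon (inhabits Czero) (fun l => Ccv (rgamma_seq z) l).
(** Gamma = 1 / rGamma (equal to 0 at the poles, by the convention Cinv 0 = 0). *)
Definition Gamma (z : Cplx) : Cplx := Cinv (rGamma z).

Definition Cderiv_at (f : R -> Cplx) (s : R) (d : Cplx) : Prop :=
  derivable_pt_lim (fun t => fst (f t)) s (fst d) /\
  derivable_pt_lim (fun t => snd (f t)) s (snd d).

Definition has_deriv (f f2 : R -> Cplx) : Prop :=
  forall s, 0 < s -> Cderiv_at f s (f2 s).

Definition sode (f r : R -> Cplx) : Prop :=
  forall s, 0 < s -> exists d, Cderiv_at f s d /\ Cmul (RtoC s) d = r s.

From Pilot Require Import Defs.
From Stdlib Require Import Reals List Lra Classical.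
From Coquelicot Require Coquelicot.
Open Scope R_scope.

(* Integrating from [s = 0] with the boundary conditions (B), the M = 2 system has the
   first integrals [xi2 - eta0 = - e1], [x0 y0 + x1 y1 + x2 y2 = 0] and
   [eta1 - xi1 - s x0 y2 - eta0 + eta0^2 - e1 eta0 = - e2].  Since [eta0' = - x0 y2], the
   quantities [eta0'], [eta0''], [eta0'''] and [G'/G] are rational in the unknowns at [s];
   eliminating [xi2], [y0] and [eta1] by the first integrals turns the identity for [G]
   into an identity of rational functions.
   The asymptotics of [1/G = y2/x0] is the quotient of those of [y2] and [x0]: asymptotic
   equivalence is compatible with quotients. *)

Module M2System.
Import Coquelicot.Coquelicot.
Local Open Scope C_scope.

(* The operations of [Defs] are definitionally those of Coquelicot, for which
   [ring] and [field] are set up. *)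
Ltac toC :=
  cbv beta; change Defs.Cadd with Cplus in *; change Defs.Cmul with Cmult in *;
  change Defs.Copp with Copp in *; change Defs.Csub with Cminus in *;
  change Defs.Cinv with Cinv in *; change Defs.Cdiv with Cdiv in *;
  change Defs.RtoC with RtoC in *; change Defs.Ci with Ci in *;
  change Czero with (RtoC 0) in *; change Cone with (RtoC 1) in *;
  change Cplx with C in *.

Lemma RtoC_neq0 (t : R) : t <> 0%R -> RtoC t <> RtoC 0.
Proof. intros H E. injection E. auto. Qed.

Lemma Cinv_0 : / RtoC 0 = RtoC 0.
Proof. apply injective_projections; simpl; unfold Rdiv; ring. Qed.

(** * Derivatives of complex-valued functions of a real variable *)

Lemma Cderiv_at_unique (f : R -> C) s d d' :
  Cderiv_at f s d -> Cderiv_at f s d' -> d = d'.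
Proof.
  destruct d as [a b], d' as [a' b']; intros [Ha Hb] [Ha' Hb']; simpl in *.
  f_equal; eapply uniqueness_limite; eauto.
Qed.

Lemma Cderiv_at_eq (f : R -> C) s d d' : Cderiv_at f s d -> d = d' -> Cderiv_at f s d'.
Proof. now intros ? <-. Qed.

Lemma Cderiv_at_const (c : C) s : Cderiv_at (fun _ => c) s (RtoC 0).
Proof. split; apply derivable_pt_lim_const. Qed.

Lemma Cderiv_at_id s : Cderiv_at (fun t => RtoC t) s (RtoC 1).
Proof. split; [apply derivable_pt_lim_id | apply derivable_pt_lim_const]. Qed.

Lemma Cderiv_at_plus (f g : R -> C) s df dg : Cderiv_at f s df -> Cderiv_at g s dg ->
  Cderiv_at (fun t => f t + g t) s (df + dg).
Proof. intros [? ?] [? ?]; split; now apply derivable_pt_lim_plus. Qed.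

Lemma Cderiv_at_opp (f : R -> C) s df : Cderiv_at f s df -> Cderiv_at (fun t => - f t) s (- df).
Proof. intros [? ?]; split; now apply derivable_pt_lim_opp. Qed.

Lemma Cderiv_at_minus (f g : R -> C) s df dg : Cderiv_at f s df -> Cderiv_at g s dg ->
  Cderiv_at (fun t => f t - g t) s (df - dg).
Proof. intros; apply Cderiv_at_plus, Cderiv_at_opp; auto. Qed.

Lemma Cderiv_at_mult (f g : R -> C) s df dg : Cderiv_at f s df -> Cderiv_at g s dg ->
  Cderiv_at (fun t => f t * g t) s (df * g s + f s * dg).
Proof.
  intros [Af Bf] [Ag Bg]; split.
  - assert (H := derivable_pt_lim_minus _ _ _ _ _
      (derivable_pt_lim_mult _ _ _ _ _ Af Ag) (derivable_pt_lim_mult _ _ _ _ _ Bf Bg)).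
    simpl; replace (fst df * fst (g s) - snd df * snd (g s)
      + (fst (f s) * fst dg - snd (f s) * snd dg))%R
      with (fst df * fst (g s) + fst (f s) * fst dg
      - (snd df * snd (g s) + snd (f s) * snd dg))%R by ring; exact H.
  - assert (H := derivable_pt_lim_plus _ _ _ _ _
      (derivable_pt_lim_mult _ _ _ _ _ Af Bg) (derivable_pt_lim_mult _ _ _ _ _ Bf Ag)).
    simpl; replace (fst df * snd (g s) + snd df * fst (g s)
      + (fst (f s) * snd dg + snd (f s) * fst dg))%R
      with (fst df * snd (g s) + fst (f s) * snd dg
      + (snd df * fst (g s) + snd (f s) * fst dg))%R by ring; exact H.
Qed.

Ltac Cderiv_auto := repeat first [ eassumption | apply Cderiv_at_minus | apply Cderiv_at_plus
  | apply Cderiv_at_opp | apply Cderiv_at_mult | apply Cderiv_at_id | apply Cderiv_at_const ].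

Lemma Cderiv_at_ext_pos (f g : R -> C) s d : 0 < s -> (forall t, 0 < t -> f t = g t) ->
  Cderiv_at g s d -> Cderiv_at f s d.
Proof.
  intros Hs E [A B].
  assert (L : forall h : C -> R, locally s (fun t => h (g t) = h (f t))).
  { intros h. exists (mkposreal s Hs). intros t Ht.
    unfold ball in Ht; simpl in Ht; unfold AbsRing_ball, abs, minus, plus, opp in Ht; simpl in Ht.
    apply Rabs_def2 in Ht. rewrite E; auto. lra. }
  split; apply is_derive_Reals.
  - eapply is_derive_ext_loc; [apply (L fst)|]. now apply is_derive_Reals.
  - eapply is_derive_ext_loc; [apply (L snd)|]. now apply is_derive_Reals.
Qed.

Lemma Cderiv_at_unique_pos (f g : R -> C) s d d' : 0 < s ->
  (forall t, 0 < t -> f t = g t) -> Cderiv_at f s d -> Cderiv_at g s d' -> d = d'.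
Proof.
  intros Hs E Hf Hg. apply (Cderiv_at_unique f s); auto.
  now apply (Cderiv_at_ext_pos f g).
Qed.

Lemma Cderiv_at_zero_const (F : R -> C) :
  (forall t, 0 < t -> Cderiv_at F t (RtoC 0)) -> forall a b, 0 < a -> 0 < b -> F a = F b.
Proof.
  intros H.
  assert (K : forall a b, 0 < a -> a < b -> F a = F b).
  { intros a b Ha Hab. apply injective_projections.
    - apply (eq_is_derive (fun t => fst (F t))); auto.
      intros t Ht. apply is_derive_Reals, (H t ltac:(lra)).
    - apply (eq_is_derive (fun t => snd (F t))); auto.
      intros t Ht. apply is_derive_Reals, (H t ltac:(lra)). }
  intros a b Ha Hb. destruct (Rtotal_order a b) as [h|[->|h]]; auto.
  symmetry; auto.
Qed.

Lemma sode_Cderiv_at (f r : R -> C) : sode f r -> forall t, 0 < t -> Cderiv_at f t (r t / RtoC t).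
Proof.
  intros H t Ht. destruct (H t Ht) as [d [Hd <-]].
  apply (Cderiv_at_eq _ _ _ _ Hd). toC; field. apply RtoC_neq0; lra.
Qed.

(** * Limits at [0+] *)

Lemma lim0_ext (f g : R -> C) (L : C) : (forall s, 0 < s -> f s = g s) -> lim0 f L -> lim0 g L.
Proof.
  intros E Hf eps He. destruct (Hf eps He) as [d [Hd K]].
  exists d; split; auto. intros s Hs. rewrite <- E by lra. auto.
Qed.

Lemma lim0_const (c : C) : lim0 (fun _ => c) c.
Proof.
  intros eps He. exists 1%R; split; [lra|]. intros s _.
  change (Cmod (c - c) < eps). replace (c - c) with (RtoC 0) by ring. now rewrite Cmod_0.
Qed.

Ltac Rmin_cases H := split; [lra | eapply Rlt_le_trans; [exact H | first [apply Rmin_l | apply Rmin_r]]].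

Lemma lim0_plus (f g : R -> C) (L M : C) :
  lim0 f L -> lim0 g M -> lim0 (fun s => f s + g s) (L + M).
Proof.
  intros Hf Hg eps He.
  destruct (Hf (eps/2)%R) as [d1 [H1 K1]]; [lra|].
  destruct (Hg (eps/2)%R) as [d2 [H2 K2]]; [lra|].
  exists (Rmin d1 d2); split; [now apply Rmin_pos|].
  intros s [Hs Hd].
  specialize (K1 s ltac:(Rmin_cases Hd)); specialize (K2 s ltac:(Rmin_cases Hd)).
  change (Cmod (f s - L) < eps/2)%R in K1; change (Cmod (g s - M) < eps/2)%R in K2.
  change (Cmod (f s + g s - (L + M)) < eps).
  replace (f s + g s - (L + M)) with ((f s - L) + (g s - M)) by ring.
  eapply Rle_lt_trans; [apply Cmod_triangle|]. lra.
Qed.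

Lemma lim0_opp (f : R -> C) (L : C) : lim0 f L -> lim0 (fun s => - f s) (- L).
Proof.
  intros Hf eps He. destruct (Hf eps He) as [d [Hd K]].
  exists d; split; auto. intros s Hs. specialize (K s Hs).
  change (Cmod (- f s - - L) < eps). change (Cmod (f s - L) < eps) in K.
  replace (- f s - - L) with (- (f s - L)) by ring. now rewrite Cmod_opp.
Qed.

Lemma lim0_minus (f g : R -> C) (L M : C) :
  lim0 f L -> lim0 g M -> lim0 (fun s => f s - g s) (L - M).
Proof. intros; apply lim0_plus, lim0_opp; auto. Qed.

Lemma lim0_mult (f g : R -> C) (L M : C) :
  lim0 f L -> lim0 g M -> lim0 (fun s => f s * g s) (L * M).
Proof.
  intros Hf Hg eps He.
  pose proof (Cmod_ge_0 L); pose proof (Cmod_ge_0 M).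
  set (k := (1 + Cmod L + Cmod M)%R).
  set (e := Rmin 1 (eps / k)).
  assert (He0 : 0 < e) by (apply Rmin_pos; [lra | apply Rdiv_lt_0_compat; unfold k; lra]).
  assert (He1 : e <= 1) by apply Rmin_l.
  assert (Hek : e * k <= eps).
  { assert (e <= eps / k) by apply Rmin_r.
    apply Rmult_le_compat_r with (r := k) in H1; [|unfold k; lra].
    unfold Rdiv in H1. rewrite Rmult_assoc, Rinv_l in H1; unfold k in *; lra. }
  destruct (Hf e He0) as [d1 [H1 K1]]; destruct (Hg e He0) as [d2 [H2 K2]].
  exists (Rmin d1 d2); split; [now apply Rmin_pos|].
  intros s [Hs Hd].
  specialize (K1 s ltac:(Rmin_cases Hd)); specialize (K2 s ltac:(Rmin_cases Hd)).
  change (Cmod (f s - L) < e)%R in K1; change (Cmod (g s - M) < e)%R in K2.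
  change (Cmod (f s * g s - L * M) < eps).
  replace (f s * g s - L * M)
    with ((f s - L) * (g s - M) + L * (g s - M) + (f s - L) * M) by ring.
  eapply Rle_lt_trans; [apply Cmod_triangle|].
  eapply Rle_lt_trans; [apply Rplus_le_compat_r, Cmod_triangle|].
  rewrite !Cmod_mult.
  pose proof (Cmod_ge_0 (f s - L)); pose proof (Cmod_ge_0 (g s - M)).
  unfold k in Hek. nra.
Qed.

Lemma lim0_inv (f : R -> C) (L : C) : L <> RtoC 0 -> lim0 f L -> lim0 (fun s => / f s) (/ L).
Proof.
  intros HL Hf eps He.
  assert (mL := proj1 (Cmod_gt_0 L) HL).
  set (e := Rmin (Cmod L / 2) (eps * Cmod L ^ 2 / 2)).
  assert (mL2 : 0 < Cmod L ^ 2) by (apply pow_lt; lra).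
  assert (He0 : 0 < e) by (apply Rmin_pos; apply Rdiv_lt_0_compat; nra).
  destruct (Hf e He0) as [d [Hd K]].
  exists d; split; auto. intros s Hs. specialize (K s Hs).
  change (Cmod (f s - L) < e)%R in K. change (Cmod (/ f s - / L) < eps).
  assert (HeL := Rmin_l (Cmod L / 2) (eps * Cmod L ^ 2 / 2)).
  assert (Heps := Rmin_r (Cmod L / 2) (eps * Cmod L ^ 2 / 2)).
  assert (Hfs : Cmod L / 2 < Cmod (f s)).
  { assert (T : Cmod L <= Cmod (f s) + Cmod (L - f s)).
    { replace L with (f s + (L - f s)) at 1 by ring. apply Cmod_triangle. }
    replace (L - f s) with (- (f s - L)) in T by ring. rewrite Cmod_opp in T.
    fold e in HeL. lra. }
  assert (Hf0 : f s <> RtoC 0) by (intro Z; rewrite Z, Cmod_0 in Hfs; lra).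
  replace (/ f s - / L) with ((L - f s) / (f s * L)) by (field; auto).
  rewrite Cmod_div, Cmod_mult by (apply Cmult_neq_0; auto).
  replace (L - f s) with (- (f s - L)) by ring. rewrite Cmod_opp.
  assert (Hb : Cmod L ^ 2 / 2 < Cmod (f s) * Cmod L) by nra.
  apply (Rmult_lt_reg_r (Cmod (f s) * Cmod L)); [nra|].
  unfold Rdiv. rewrite Rmult_assoc, Rinv_l by nra. fold e in Heps. nra.
Qed.

Lemma lim0_eventually_const (F : R -> C) (c L : C) :
  (forall s, 0 < s -> F s = c) -> lim0 F L -> c = L.
Proof.
  intros E H.
  destruct (Req_dec (Cmod (c - L)) 0) as [Z|Z].
  - apply Cmod_eq_0 in Z. replace c with ((c - L) + L) by ring. rewrite Z. ring.
  - pose proof (Cmod_ge_0 (c - L)).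
    destruct (H (Cmod (c - L))) as [d [Hd K]]; [lra|].
    specialize (K (d/2)%R ltac:(lra)). change (Cmod (F (d/2)%R - L) < Cmod (c - L)) in K.
    rewrite E in K by lra. lra.
Qed.

Lemma first_integral (F : R -> C) (L : C) :
  (forall t, 0 < t -> Cderiv_at F t (RtoC 0)) -> lim0 F L -> forall t, 0 < t -> F t = L.
Proof.
  intros D H t Ht. apply (lim0_eventually_const F (F t) L); auto.
  intros u Hu. now apply Cderiv_at_zero_const.
Qed.

Ltac lim0_auto := repeat first [ eassumption | apply lim0_minus | apply lim0_plus
  | apply lim0_opp | apply lim0_mult | apply lim0_const ].

(** * Asymptotic equivalence at [0+] *)

(* With the convention [/ 0 = 0], inversion is multiplicative and involutive on all of [C]. *)
Lemma Cinv_mult_total (x y : C) : / (x * y) = / x * / y.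
Proof.
  destruct (classic (x = RtoC 0)) as [->|Hx]; [rewrite Cmult_0_l, Cinv_0; ring|].
  destruct (classic (y = RtoC 0)) as [->|Hy]; [rewrite Cmult_0_r, Cinv_0; ring|].
  field; auto.
Qed.

Lemma Cinv_inv_total (x : C) : / / x = x.
Proof.
  destruct (classic (x = RtoC 0)) as [->|Hx]; [now rewrite !Cinv_0|].
  field; auto.
Qed.

Lemma asym0_ext (f a b : R -> C) :
  (forall s, 0 < s -> a s = b s) -> asym0 f a -> asym0 f b.
Proof. intros E. apply lim0_ext. intros s Hs. now rewrite (E s Hs). Qed.

Lemma asym0_div (f g a b : R -> C) :
  asym0 f a -> asym0 g b -> asym0 (fun s => g s / f s) (fun s => b s / a s).
Proof.
  intros Hf Hg. unfold asym0.
  assert (H := lim0_mult _ _ _ _ Hg (lim0_inv _ _ (RtoC_neq0 _ R1_neq_R0) Hf)).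
  toC. replace (RtoC 1 * / RtoC 1) with (RtoC 1) in H by (field; apply RtoC_neq0, R1_neq_R0).
  revert H; apply lim0_ext; intros s _.
  unfold Cdiv. rewrite !Cinv_mult_total, Cinv_inv_total. ring.
Qed.

Lemma asym0_nonvanishing (f a : R -> C) : asym0 f a -> exists s, 0 < s /\ a s <> RtoC 0.
Proof.
  intros H. destruct (H 1%R ltac:(lra)) as [d [Hd K]].
  exists (d/2)%R; split; [lra|]. intros Z. specialize (K (d/2)%R ltac:(lra)).
  change (Cmod (f (d/2)%R / a (d/2)%R - RtoC 1) < 1) in K.
  rewrite Z in K. unfold Cdiv in K. rewrite Cinv_0 in K.
  replace (f (d / 2)%R * RtoC 0 - RtoC 1) with (- RtoC 1) in K by ring.
  rewrite Cmod_opp, Cmod_1 in K. lra.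
Qed.

Lemma Cexp_add (a b : C) : Cexp (a + b) = Cexp a * Cexp b.
Proof.
  unfold Cexp; apply injective_projections; simpl;
    rewrite exp_plus, ?cos_plus, ?sin_plus; ring.
Qed.

Lemma Cexp_0 : Cexp (RtoC 0) = RtoC 1.
Proof.
  unfold Cexp; apply injective_projections; simpl; rewrite exp_0, ?cos_0, ?sin_0; ring.
Qed.

Lemma Cpow_add (s : R) (z w : C) : Defs.Cpow s (z + w) = Defs.Cpow s z * Defs.Cpow s w.
Proof. unfold Defs.Cpow. rewrite <- Cexp_add. f_equal. toC. ring. Qed.

Lemma Cpow_opp_mul (s : R) (z : C) : Defs.Cpow s (- z) * Defs.Cpow s z = RtoC 1.
Proof. unfold Defs.Cpow. rewrite <- Cexp_add, <- Cexp_0. f_equal. toC. ring. Qed.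

Lemma Cpow_neq0 (s : R) (z : C) : Defs.Cpow s z <> RtoC 0.
Proof.
  intro Z. pose proof (Cpow_opp_mul s z) as H. rewrite Z in H.
  replace (Defs.Cpow s (- z) * RtoC 0) with (RtoC 0) in H by ring. injection H. lra.
Qed.

Lemma Cmult_eq_1_inv (a b : C) : a * b = RtoC 1 -> a = / b.
Proof.
  intros H.
  assert (Hb : b <> RtoC 0).
  { intros ->. rewrite Cmult_0_r in H. injection H. lra. }
  rewrite <- (Cmult_1_l (/ b)), <- H. field. auto.
Qed.

Lemma Cpow_opp (s : R) (z : C) : Defs.Cpow s (- z) = / Defs.Cpow s z.
Proof. apply Cmult_eq_1_inv, Cpow_opp_mul. Qed.

Lemma leading_terms_ratio (g1 g2 g21 g12 P0 P1 P2 : C) :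
  g1 <> RtoC 0 -> g2 <> RtoC 0 -> P0 <> RtoC 0 ->
  (Ci * g21 * P1 / g1 + Ci * g12 * P2 / g2) / (- (Ci * / P0) / (g1 * g2))
  = - (g21 * g2 * (P1 * P0)) - g12 * g1 * (P2 * P0).
Proof.
  intros. assert (Ci <> RtoC 0) by (intro Z; injection Z; lra).
  field. auto.
Qed.

Lemma asym0_ratio_of_leading_terms (x y : R -> C) (g1 g2 g21 g12 n0 n1 n2 : C) :
  asym0 x (fun s => - (Ci * Defs.Cpow s (- n0)) / (g1 * g2)) ->
  asym0 y (fun s => Ci * g21 * Defs.Cpow s n1 / g1 + Ci * g12 * Defs.Cpow s n2 / g2) ->
  asym0 (fun s => y s / x s)
    (fun s => - (g21 * g2 * Defs.Cpow s (n1 + n0)) - g12 * g1 * Defs.Cpow s (n2 + n0)).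
Proof.
  intros Hx Hy.
  assert (Hg : g1 * g2 <> RtoC 0).
  { destruct (asym0_nonvanishing _ _ Hx) as [s [_ Hs]]. intros Z; apply Hs.
    unfold Cdiv. rewrite Z, Cinv_0. ring. }
  refine (asym0_ext _ _ _ _ (asym0_div _ _ _ _ Hx Hy)). intros s _.
  rewrite !Cpow_add, Cpow_opp. apply leading_terms_ratio; try apply Cpow_neq0;
    intros Z; apply Hg; rewrite Z; ring.
Qed.

(** * The M = 2 system *)

Section M2Equations.

Variables (x0 x1 x2 y0 y1 y2 xi0 xi1 xi2 eta0 eta1 eta2 : R -> C) (e1 e2 : C).

Hypothesis Sx0 : sode x0 (fun s => - eta0 s * x0 s - x1 s).
Hypothesis Sx1 : sode x1 (fun s => - eta1 s * x0 s - x2 s).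
Hypothesis Sx2 : sode x2 (fun s => - eta2 s * x0 s - RtoC s * x0 s + xi0 s * x0 s
                                   + xi1 s * x1 s + xi2 s * x2 s).
Hypothesis Sy2 : sode y2 (fun s => - xi2 s * y2 s + y1 s).
Hypothesis Sy1 : sode y1 (fun s => - xi1 s * y2 s + y0 s).
Hypothesis Sy0 : sode y0 (fun s => - xi0 s * y2 s + RtoC s * y2 s + eta0 s * y0 s
                                   + eta1 s * y1 s + eta2 s * y2 s).
Hypothesis Dxi1 : has_deriv xi1 (fun s => - (x0 s * y1 s)).
Hypothesis Dxi2 : has_deriv xi2 (fun s => - (x0 s * y2 s)).
Hypothesis Deta0 : has_deriv eta0 (fun s => - (x0 s * y2 s)).
Hypothesis Deta1 : has_deriv eta1 (fun s => - (x1 s * y2 s)).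

Hypothesis Beta0 : lim0 eta0 (RtoC 0).
Hypothesis Beta1 : lim0 eta1 (RtoC 0).
Hypothesis Bxi1 : lim0 xi1 e2.
Hypothesis Bxi2 : lim0 xi2 (- e1).

Let dx0 := sode_Cderiv_at _ _ Sx0.
Let dx1 := sode_Cderiv_at _ _ Sx1.
Let dx2 := sode_Cderiv_at _ _ Sx2.
Let dy0 := sode_Cderiv_at _ _ Sy0.
Let dy1 := sode_Cderiv_at _ _ Sy1.
Let dy2 := sode_Cderiv_at _ _ Sy2.

Lemma xi2_eq_eta0_sub_e1 t : 0 < t -> xi2 t = eta0 t - e1.
Proof.
  intros Ht.
  assert (F : xi2 t - eta0 t = - e1 - RtoC 0).
  { apply (first_integral (fun t => xi2 t - eta0 t)); auto; [|lim0_auto].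
    intros u Hu. specialize (Dxi2 u Hu); specialize (Deta0 u Hu).
    eapply Cderiv_at_eq; [Cderiv_auto | toC; ring]. }
  replace (xi2 t) with ((xi2 t - eta0 t) + eta0 t) by ring. rewrite F. ring.
Qed.

Lemma pairing_xy_eq0 :
  lim0 (fun s => x0 s * y0 s) (RtoC 0) -> lim0 (fun s => x1 s * y1 s) (RtoC 0) ->
  lim0 (fun s => x2 s * y2 s) (RtoC 0) ->
  forall t, 0 < t -> x0 t * y0 t + x1 t * y1 t + x2 t * y2 t = RtoC 0.
Proof.
  intros B0 B1 B2 t Ht.
  rewrite (first_integral (fun t => x0 t * y0 t + x1 t * y1 t + x2 t * y2 t)
             (RtoC 0 + RtoC 0 + RtoC 0)); auto; [ring | |lim0_auto].
  intros u Hu. specialize (dx0 u Hu); specialize (dx1 u Hu); specialize (dx2 u Hu);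
    specialize (dy0 u Hu); specialize (dy1 u Hu); specialize (dy2 u Hu).
  eapply Cderiv_at_eq; [Cderiv_auto | toC; field; apply RtoC_neq0; lra].
Qed.

Lemma eta1_first_integral : lim0 (fun s => RtoC s * (x0 s * y2 s)) (RtoC 0) ->
  forall t, 0 < t ->
  eta1 t - xi1 t - RtoC t * (x0 t * y2 t) - eta0 t + eta0 t * eta0 t - e1 * eta0 t = - e2.
Proof.
  intros B t Ht.
  rewrite (first_integral (fun t => eta1 t - xi1 t - RtoC t * (x0 t * y2 t) - eta0 t
             + eta0 t * eta0 t - e1 * eta0 t)
             (RtoC 0 - e2 - RtoC 0 - RtoC 0 + RtoC 0 * RtoC 0 - e1 * RtoC 0));
    auto; [ring | |lim0_auto].
  intros u Hu.
  assert (Hxi2 := xi2_eq_eta0_sub_e1 u Hu).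
  specialize (dx0 u Hu); specialize (dy2 u Hu); specialize (Deta1 u Hu);
    specialize (Dxi1 u Hu); specialize (Deta0 u Hu).
  eapply Cderiv_at_eq; [Cderiv_auto|]. cbv beta. rewrite Hxi2. toC; field; apply RtoC_neq0; lra.
Qed.

Lemma eta0_deriv1 (d1 : R -> C) : has_deriv eta0 d1 ->
  forall t, 0 < t -> d1 t = - (x0 t * y2 t).
Proof. intros Hd1 t Ht. exact (Cderiv_at_unique _ _ _ _ (Hd1 t Ht) (Deta0 t Ht)). Qed.

Lemma eta0_deriv2 (d1 d2 : R -> C) : has_deriv eta0 d1 -> has_deriv d1 d2 ->
  forall t, 0 < t ->
  RtoC t * d2 t = - ((- eta0 t * x0 t - x1 t) * y2 t + x0 t * (- xi2 t * y2 t + y1 t)).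
Proof.
  intros Hd1 Hd2 t Ht.
  assert (E : d2 t = - ((- eta0 t * x0 t - x1 t) / RtoC t * y2 t
                        + x0 t * ((- xi2 t * y2 t + y1 t) / RtoC t))).
  { specialize (dx0 t Ht); specialize (dy2 t Ht).
    apply (Cderiv_at_unique_pos d1 (fun u => - (x0 u * y2 u)) t); auto;
      [apply eta0_deriv1; auto | Cderiv_auto]. }
  rewrite E. field. apply RtoC_neq0; lra.
Qed.

Lemma solve_linear (a b c x : C) : b <> RtoC 0 -> c + b * x = a -> x = (a - c) / b.
Proof. intros Hb <-. field. auto. Qed.

Lemma G_eta0_identity (d1 d2 d3 g1 : R -> C) :
  lim0 (fun s => RtoC s * (x0 s * y2 s)) (RtoC 0) ->
  lim0 (fun s => x0 s * y0 s) (RtoC 0) -> lim0 (fun s => x1 s * y1 s) (RtoC 0) ->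
  lim0 (fun s => x2 s * y2 s) (RtoC 0) ->
  (forall t, 0 < t -> y2 t <> RtoC 0) ->
  has_deriv eta0 d1 -> has_deriv d1 d2 -> has_deriv d2 d3 ->
  has_deriv (fun t => x0 t / y2 t) g1 ->
  forall s, 0 < s -> d1 s <> RtoC 0 ->
  let G := x0 s / y2 s in
  (RtoC 3 * RtoC s * (g1 s / G) + RtoC 2 * e1) * (RtoC 3 * RtoC s * (g1 s / G) + RtoC 2 * e1)
    - RtoC 4 * (e1 * e1)
  = RtoC 12 * (eta0 s - e2 - RtoC 3 * RtoC s * d1 s - RtoC s * (d2 s / d1 s))
    - RtoC 12 * (RtoC s * RtoC s)
      * (d3 s / d1 s - RtoC (3/4) * ((d2 s / d1 s) * (d2 s / d1 s))).
Proof.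
  intros Bsxy B0 B1 B2 Hy2 Hd1 Hd2 Hd3 Hg1 s Hs Hd1s G.
  assert (Hs0 : RtoC s <> RtoC 0) by (apply RtoC_neq0; lra).
  assert (Hy2s := Hy2 s Hs).
  assert (Hx0s : x0 s <> RtoC 0).
  { intros Z. apply Hd1s. rewrite (eta0_deriv1 d1 Hd1 s Hs), Z. ring. }
  assert (Hsd2 := eta0_deriv2 d1 d2 Hd1 Hd2).
  (* [d3] is read off by differentiating the formula for [s d2(s)]. *)
  assert (Hsd3 := Cderiv_at_mult _ _ _ _ _ (Cderiv_at_id s) (Hd3 s Hs)).
  assert (dx0s := dx0 s Hs); assert (dx1s := dx1 s Hs); assert (dy1s := dy1 s Hs);
    assert (dy2s := dy2 s Hs); assert (deta0s := Deta0 s Hs); assert (dxi2s := Dxi2 s Hs).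
  eassert (Dsd2 : Cderiv_at (fun u => - ((- eta0 u * x0 u - x1 u) * y2 u
                                         + x0 u * (- xi2 u * y2 u + y1 u))) s _)
    by Cderiv_auto.
  assert (Ed3 := Cderiv_at_unique_pos _ _ _ _ _ Hs Hsd2 Hsd3 Dsd2).
  clear Hsd3 Dsd2.
  (* [g1] is read off [x0 = G y2]. *)
  assert (Hg := Cderiv_at_mult _ _ _ _ _ (Hg1 s Hs) dy2s).
  assert (Ex0 : forall t, 0 < t -> x0 t = x0 t / y2 t * y2 t) by (intros; field; auto).
  assert (Eg1 := Cderiv_at_unique_pos _ _ _ _ _ Hs Ex0 dx0s Hg).
  clear Hg.
  cbv beta in Ed3. apply solve_linear in Ed3; [|auto].
  assert (Eg : g1 s = ((- eta0 s * x0 s - x1 s) / RtoC s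
                       - x0 s / y2 s * ((- xi2 s * y2 s + y1 s) / RtoC s)) / y2 s).
  { rewrite Eg1. field. auto. }
  assert (Ed2 : d2 s = (- ((- eta0 s * x0 s - x1 s) * y2 s
                           + x0 s * (- xi2 s * y2 s + y1 s))) / RtoC s).
  { rewrite <- (Hsd2 s Hs). field. auto. }
  assert (Eeta1 : eta1 s = xi1 s + RtoC s * (x0 s * y2 s) + eta0 s - eta0 s * eta0 s
                          + e1 * eta0 s - e2).
  { transitivity (xi1 s + RtoC s * (x0 s * y2 s) + eta0 s - eta0 s * eta0 s + e1 * eta0 s
      + (eta1 s - xi1 s - RtoC s * (x0 s * y2 s) - eta0 s + eta0 s * eta0 s - e1 * eta0 s));
      [ring|].
    rewrite (eta1_first_integral Bsxy s Hs). ring. }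
  assert (Ey0 : y0 s = - (x1 s * y1 s + x2 s * y2 s) / x0 s).
  { replace (y0 s) with ((x0 s * y0 s + x1 s * y1 s + x2 s * y2 s
                           - (x1 s * y1 s + x2 s * y2 s)) / x0 s) by (field; auto).
    rewrite (pairing_xy_eq0 B0 B1 B2 s Hs). field. auto. }
  subst G. rewrite Eg, Ed3, Ed2, (eta0_deriv1 d1 Hd1 s Hs), Ey0, Eeta1,
    (xi2_eq_eta0_sub_e1 s Hs), (RtoC_div 3 4) by lra.
  field. auto.
Qed.

End M2Equations.

End M2System.

Theorem mainTheorem10
  (nu0 nu1 nu2 : Cplx)
  (Hnu : forall k : Z, Csub nu2 nu1 <> RtoC (IZR k))
  (x0 x1 x2 y0 y1 y2 xi0 xi1 xi2 eta0 eta1 eta2 : R -> Cplx)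
  (e1 e2 e3 : Cplx)
  (He1 : e1 = (nu0 + nu1 + nu2)%C)
  (He2 : e2 = (nu0 * nu1 + nu0 * nu2 + nu1 * nu2)%C)
  (He3 : e3 = (nu0 * nu1 * nu2)%C)
  (* the M = 2 system *)
  (Sx0 : sode x0 (fun s => (- eta0 s * x0 s - x1 s)%C))
  (Sx1 : sode x1 (fun s => (- eta1 s * x0 s - x2 s)%C))
  (Sx2 : sode x2 (fun s => (- eta2 s * x0 s - RtoC s * x0 s + xi0 s * x0 s
                             + xi1 s * x1 s + xi2 s * x2 s)%C))
  (Sy2 : sode y2 (fun s => (- xi2 s * y2 s + y1 s)%C))
  (Sy1 : sode y1 (fun s => (- xi1 s * y2 s + y0 s)%C))
  (Sy0 : sode y0 (fun s => (- xi0 s * y2 s + RtoC s * y2 s + eta0 s * y0 s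
                             + eta1 s * y1 s + eta2 s * y2 s)%C))
  (Dxi0 : has_deriv xi0 (fun s => (- (x0 s * y0 s))%C))
  (Dxi1 : has_deriv xi1 (fun s => (- (x0 s * y1 s))%C))
  (Dxi2 : has_deriv xi2 (fun s => (- (x0 s * y2 s))%C))
  (Deta0 : has_deriv eta0 (fun s => (- (x0 s * y2 s))%C))
  (Deta1 : has_deriv eta1 (fun s => (- (x1 s * y2 s))%C))
  (Deta2 : has_deriv eta2 (fun s => (- (x2 s * y2 s))%C))
  (* boundary conditions (B) *)
  (Beta0 : lim0 eta0 Czero) (Beta1 : lim0 eta1 Czero) (Beta2 : lim0 eta2 Czero)
  (Bxi0 : lim0 xi0 (- e3)%C) (Bxi1 : lim0 xi1 e2) (Bxi2 : lim0 xi2 (- e1)%C)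
  (Bxy : forall f g, In f (x0 :: x1 :: x2 :: nil) -> In g (y0 :: y1 :: y2 :: nil) ->
           lim0 (fun s => (f s * g s)%C) Czero /\
           lim0 (fun s => (RtoC s * (f s * g s))%C) Czero)
  (* nondegeneracy: eta0'(s) <> 0 and y2(s) <> 0 for s > 0 *)
  (Hdeta0 : forall d1, has_deriv eta0 d1 -> forall s, 0 < s -> d1 s <> Czero)
  (Hy2 : forall s, 0 < s -> y2 s <> Czero)
  : (* first claim, with G := x0 / y2 *)
    (forall d1 d2 d3 g1 : R -> Cplx,
      has_deriv eta0 d1 -> has_deriv d1 d2 -> has_deriv d2 d3 ->
      has_deriv (fun s => (x0 s / y2 s)%C) g1 ->
      forall s, 0 < s ->
      let G := (x0 s / y2 s)%C in
      ((RtoC 3 * RtoC s * (g1 s / G) + RtoC 2 * e1) ^2 - RtoC 4 * e1 ^2)%C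
      = (RtoC 12 * (eta0 s - e2 - RtoC 3 * RtoC s * d1 s - RtoC s * (d2 s / d1 s))
         - RtoC 12 * (RtoC s) ^2 * (d3 s / d1 s - RtoC (3/4) * (d2 s / d1 s) ^2))%C)
    /\
    (* second claim: asymptotics of G^{-1} = y2 / x0 *)
    (asym0 x0 (fun s => (- (Ci * Cpow s (- nu0)) /
                 (Gamma (nu1 - nu0 + Cone) * Gamma (nu2 - nu0 + Cone)))%C) ->
     asym0 y2 (fun s => (Ci * Gamma (nu2 - nu1) * Cpow s nu1 / Gamma (nu1 - nu0 + Cone)
                 + Ci * Gamma (nu1 - nu2) * Cpow s nu2 / Gamma (nu2 - nu0 + Cone))%C) ->
     asym0 (fun s => (y2 s / x0 s)%C)
           (fun s => (- (Gamma (nu2 - nu1) * Gamma (nu2 - nu0 + Cone) * Cpow s (nu1 + nu0))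
                      - Gamma (nu1 - nu2) * Gamma (nu1 - nu0 + Cone) * Cpow s (nu2 + nu0))%C)).
Proof.
  assert (Bprod : forall f g, In f (x0 :: x1 :: x2 :: nil) -> In g (y0 :: y1 :: y2 :: nil) ->
            lim0 (fun s => (f s * g s)%C) Czero) by (intros; now apply Bxy).
  split.
  - intros d1 d2 d3 g1 Hd1 Hd2 Hd3 Hg1 s Hs.
    eapply M2System.G_eta0_identity; eauto.
    + apply (Bxy x0 y2); simpl; auto.
    + apply Bprod; simpl; auto.
    + apply Bprod; simpl; auto.
    + apply Bprod; simpl; auto.
  - apply M2System.asym0_ratio_of_leading_terms.
Qed.
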